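(* Let $G$ be a free abelian group with a basis $E$, let $e\in E$, let $\check G$ be the subgroup generated by $E\setminus\{e\}$, and let $\lambda$ be the shift on $(G,e)^{\otimes\mathbb{Z}}$. If $z\in(G,e)^{\otimes\mathbb{Z}}$ and $w\in H(G,e)$ satisfy $(\mathrm{id}-\lambda)(z)=w$, then $z\in\mathbb{Z}e^{\otimes\mathbb{Z}}$ and $w=0$.
   Context: $(G,e)^{\otimes\mathbb{Z}}$ is the inductive limit of $G\to G^{\otimes3}\to G^{\otimes5}\to\cdots$ (tensor products over $\mathbb{Z}$) with connecting maps $x\mapsto e\otimes x\otimes e$; equivalently it is the span of formal tensors $\bigotimes_{i\in\mathbb{Z}}x_i$ with $x_i\in G$ and $x_i=e$ for all but finitely many $i$ (with $G^{\otimes 2n-1}$ identified with the span of those with $x_i=e$ for $|i|\ge n$). $e^{\otimes\mathbb{Z}}=\bigotimes_{i\in\mathbb{Z}}e$. The shift $\lambda$ is the automorphism with $\lambda(\bigotimes_i x_i)=\bigotimes_i x_{i-1}$. $\check G\otimes G^{\otimes\mathbb{N}}$ denotes the span of those $\bigotimes_i x_i$ with $x_0\in\check G$ and $x_i=e$ for all $i<0$, and $H(G,e):=\mathbb{Z}e^{\otimes\mathbb{Z}}+\check G\otimes G^{\otimes\mathbb{N}}$. *)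

(* Concrete model of (G,e)^{\otimes Z} for G free abelian on a basis E:
   G^{\otimes Z} is the free abelian group on the "basis words"
   u : Z -> E with u i = e for all but finitely many i (the pure tensors
   \bigotimes_i u_i of basis elements). *)
From Stdlib Require Import ZArith List.
Open Scope Z_scope.

Definition fin_supp {X : Type} (f : X -> Z) : Prop :=
  exists l : list X, forall x, f x <> 0 -> In x l.

Definition almost_e {E : Type} (e : E) (u : Z -> E) : Prop :=
  exists N : nat, forall i : Z, Z.of_nat N <= Z.abs i -> u i = e.

Definition tensorZ {E : Type} (e : E) (z : (Z -> E) -> Z) : Prop :=
  fin_supp z /\ forall u, z u <> 0 -> almost_e e u.

(* the shift lambda(\bigotimes_i x_i) = \bigotimes_i x_{i-1}; on coefficient
   functions: (lambda z)(u) = z(i |-> u (i+1)) *)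
Definition shiftT {E : Type} (z : (Z -> E) -> Z) : (Z -> E) -> Z :=
  fun u => z (fun i => u (i + 1)).

Definition e_word {E : Type} (e : E) : Z -> E := fun _ => e.

Definition in_Ze {E : Type} (e : E) (z : (Z -> E) -> Z) : Prop :=
  forall u, u <> e_word e -> z u = 0.

(* w \in H(G,e) = Z e^{\otimes Z} + \check G \otimes G^{\otimes N}; since \check G
   is spanned by E \ {e}, \check G \otimes G^{\otimes N} is spanned by the basis
   words u with u 0 <> e and u i = e for all i < 0. *)
Definition in_H {E : Type} (e : E) (w : (Z -> E) -> Z) : Prop :=
  tensorZ e w /\
  forall u, w u <> 0 ->
    u = e_word e \/ (u 0 <> e /\ forall i, i < 0 -> u i = e).

(* Fix a basis word u that is not e^{\otimes Z}, look at its shifts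
   v_k = \lambda^{-k} u and put f k = z(v_k), g k = w(v_k).  Then
   f k - f (k+1) = g k, f vanishes for |k| large because z is a finite sum of
   words that are e outside a common window, and g is nonzero at most once:
   a word of \check G \otimes G^{\otimes N} has its first letter different
   from e at position 0, so v_k can be such a word only when k is the first
   position at which u differs from e.  A telescoping sequence vanishing at
   both ends with a single jump is identically zero, so z(u) = 0.  Hence
   z \in Z e^{\otimes Z}, which is fixed by the shift, and w = z - \lambda z = 0. *)
From Stdlib Require Import ZArith List Lia Classical FunctionalExtensionality.
Open Scope Z_scope.

Lemma telescope_flat (f g : Z -> Z) :
  (forall k, f k - f (k + 1) = g k) ->
  forall k n, (forall m, k <= m < k + Z.of_nat n -> g m = 0) ->
  f k = f (k + Z.of_nat n).
Proof.
  intros Hstep k n; induction n as [|n IH]; intros Hflat.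
  - now rewrite Z.add_0_r.
  - rewrite IH by (intros m Hm; apply Hflat; lia).
    specialize (Hstep (k + Z.of_nat n)).
    rewrite Hflat in Hstep by lia.
    replace (k + Z.of_nat (S n)) with (k + Z.of_nat n + 1) by lia; lia.
Qed.

Lemma single_jump_vanish (f g : Z -> Z) (B : Z) :
  (forall k, f k - f (k + 1) = g k) ->
  (forall k, B <= Z.abs k -> f k = 0) ->
  (forall k1 k2, g k1 <> 0 -> g k2 <> 0 -> k1 = k2) ->
  forall k, f k = 0.
Proof.
  intros Hstep Hfar Hjump k.
  set (n := Z.to_nat (Z.abs B + Z.abs k)).
  destruct (classic (exists m, k <= m /\ g m <> 0)) as [[m0 [Hm0 Hg0]] | Hnone].
  - (* the only jump lies at or after k: walk down to the far left *)
    set (s := k - Z.of_nat n).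
    replace k with (s + Z.of_nat n) by (unfold s; lia).
    rewrite <- (telescope_flat f g Hstep s n).
    + apply Hfar; unfold s, n; lia.
    + intros m Hm; destruct (Z.eq_dec (g m) 0) as [|Hg]; [assumption|].
      pose proof (Hjump m m0 Hg Hg0); unfold s in Hm; lia.
  - rewrite (telescope_flat f g Hstep k n).
    + apply Hfar; unfold n; lia.
    + intros m Hm; destruct (Z.eq_dec (g m) 0) as [|Hg]; [assumption|].
      exfalso; apply Hnone; exists m; split; [lia | assumption].
Qed.

Section ShiftOrbit.

Variables (E : Type) (e : E).

Definition shift_word (u : Z -> E) (k : Z) : Z -> E := fun i => u (i + k).

Lemma shift_word0 (u : Z -> E) : shift_word u 0 = u.
Proof.
  apply functional_extensionality; intros i; unfold shift_word; now rewrite Z.add_0_r.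
Qed.

Lemma shiftT_shift_word (z : (Z -> E) -> Z) (u : Z -> E) (k : Z) :
  shiftT z (shift_word u k) = z (shift_word u (k + 1)).
Proof.
  unfold shiftT, shift_word; f_equal.
  apply functional_extensionality; intros i; f_equal; ring.
Qed.

Lemma tensorZ_support_bound (z : (Z -> E) -> Z) :
  tensorZ e z ->
  exists N, forall x, z x <> 0 -> forall i, N <= Z.abs i -> x i = e.
Proof.
  unfold tensorZ, fin_supp; intros [[l Hl] Halmost].
  assert (Hlist : exists N, forall x, In x l -> z x <> 0 ->
                    forall i, N <= Z.abs i -> x i = e).
  { clear Hl; induction l as [|a l [N HN]].
    - exists 0; intros x [].
    - destruct (Z.eq_dec (z a) 0) as [Ha | Ha].
      + exists N; intros x [<- | Hx] Hzx; [contradiction | exact (HN x Hx Hzx)].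
      + destruct (Halmost a Ha) as [Na HNa].
        exists (Z.abs N + Z.of_nat Na); intros x [<- | Hx] Hzx i Hi.
        * apply HNa; lia.
        * apply (HN x Hx Hzx); lia. }
  destruct Hlist as [N HN]; exists N; intros x Hzx; exact (HN x (Hl x Hzx) Hzx).
Qed.

Lemma in_H_shift_word_first_letter (w : (Z -> E) -> Z) (u : Z -> E) (j k : Z) :
  in_H e w -> u j <> e -> w (shift_word u k) <> 0 ->
  u k <> e /\ forall i, i < k -> u i = e.
Proof.
  intros [_ Hw] Hj Hwk.
  destruct (Hw _ Hwk) as [Heword | [Hfirst Hleft]].
  - exfalso; apply Hj.
    pose proof (f_equal (fun v => v (j - k)) Heword) as Hjk.
    unfold shift_word, e_word in Hjk; now rewrite Z.sub_add in Hjk.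
  - split.
    + exact Hfirst.
    + intros i Hi; specialize (Hleft (i - k) ltac:(lia)).
      unfold shift_word in Hleft; now rewrite Z.sub_add in Hleft.
Qed.

Lemma in_H_shift_orbit_single (w : (Z -> E) -> Z) (u : Z -> E) (j k1 k2 : Z) :
  in_H e w -> u j <> e ->
  w (shift_word u k1) <> 0 -> w (shift_word u k2) <> 0 -> k1 = k2.
Proof.
  intros Hw Hj H1 H2.
  destruct (in_H_shift_word_first_letter w u j k1 Hw Hj H1) as [Hu1 Hleft1].
  destruct (in_H_shift_word_first_letter w u j k2 Hw Hj H2) as [Hu2 Hleft2].
  destruct (Z.lt_total k1 k2) as [Hlt | [Heq | Hlt]].
  - now exfalso; apply Hu1, Hleft2.
  - exact Heq.
  - now exfalso; apply Hu2, Hleft1.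
Qed.

Lemma coboundary_H_vanish (z w : (Z -> E) -> Z) (u : Z -> E) (j : Z) :
  tensorZ e z -> in_H e w -> (forall v, z v - shiftT z v = w v) ->
  u j <> e -> z u = 0.
Proof.
  intros Hz Hw Hcob Hj.
  destruct (tensorZ_support_bound z Hz) as [N HN].
  rewrite <- (shift_word0 u).
  apply (single_jump_vanish (fun k => z (shift_word u k))
           (fun k => w (shift_word u k)) (Z.abs j + N)).
  - intros k; rewrite <- Hcob; now rewrite shiftT_shift_word.
  - intros k Hk; destruct (Z.eq_dec (z (shift_word u k)) 0) as [|Hzk]; [assumption|].
    exfalso; apply Hj.
    specialize (HN _ Hzk (j - k) ltac:(lia)).
    unfold shift_word in HN; now rewrite Z.sub_add in HN.
  - intros k1 k2; exact (in_H_shift_orbit_single w u j k1 k2 Hw Hj).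
Qed.

Lemma not_e_word (u : Z -> E) : u <> e_word e -> exists j, u j <> e.
Proof.
  intros Hu; apply NNPP; intros Hall; apply Hu.
  apply functional_extensionality; intros i.
  apply NNPP; intros Hi; apply Hall; now exists i.
Qed.

Lemma in_Ze_shift_invariant (z : (Z -> E) -> Z) (u : Z -> E) :
  in_Ze e z -> z u - shiftT z u = 0.
Proof.
  intros Hz; destruct (classic (u = e_word e)) as [-> | Hu].
  - unfold shiftT, e_word; ring.
  - destruct (not_e_word u Hu) as [j Hj].
    unfold shiftT; rewrite (Hz u Hu), Hz; [ring|].
    intros Hshift; apply Hj.
    pose proof (f_equal (fun v => v (j - 1)) Hshift) as Hj1.
    simpl in Hj1; now rewrite Z.sub_add in Hj1.
Qed.

End ShiftOrbit.

Theorem lemma2 (E : Type) (e : E) (z w : (Z -> E) -> Z) :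
  tensorZ e z -> in_H e w ->
  (forall u, z u - shiftT z u = w u) ->
  in_Ze e z /\ (forall u, w u = 0).
Proof.
  intros Hz Hw Hcob.
  assert (HZe : in_Ze e z).
  { intros u Hu; destruct (not_e_word E e u Hu) as [j Hj].
    exact (coboundary_H_vanish E e z w u j Hz Hw Hcob Hj). }
  split; [exact HZe|].
  intros u; rewrite <- Hcob; exact (in_Ze_shift_invariant E e z u HZe).
Qed.
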